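(* Let $d\in\mathbb{N}$. A probability distribution of an $\mathbb{N}^d$-valued random vector $(\tau_1,\ldots,\tau_d)$ satisfies the local discrete multivariate lack-of-memory property, i.e. for every $k\in\{1,\ldots,d\}$, all $1\le i_1,\ldots,i_k\le d$ and all $m,n_{i_1},\ldots,n_{i_k}\in\mathbb{N}_0$, $$\mathbb{P}(\tau_{i_1}>n_{i_1}+m,\ldots,\tau_{i_k}>n_{i_k}+m\mid \tau_{i_1}>m,\ldots,\tau_{i_k}>m)=\mathbb{P}(\tau_{i_1}>n_{i_1},\ldots,\tau_{i_k}>n_{i_k}),$$ if and only if it is a $d$-variate wide-sense geometric law $\mathcal{G}^{\mathcal W}(\tilde{\mathbf p})$ for some admissible parameters $\tilde{\mathbf p}$. In that case one can take $\tilde p_I=\mathbb{P}(\{\tau_i>1\ \forall i\notin I\}\cap\{\tau_i=1\ \forall i\in I\})$, $I\subseteq\{1,\ldots,d\}$.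
   Context: $\mathbb{N}=\{1,2,\ldots\}$, $\mathbb{N}_0=\{0\}\cup\mathbb{N}$. Wide-sense geometric law $\mathcal{G}^{\mathcal W}(\tilde{\mathbf p})$: given parameters $\tilde p_I\in[0,1]$, $I\subseteq\{1,\ldots,d\}$ (including $I=\emptyset$), with $\sum_I\tilde p_I=1$ and $\sum_{I:k\notin I}\tilde p_I<1$ for each $k=1,\ldots,d$, run i.i.d. trials of an experiment whose outcome is the set $I$ with probability $\tilde p_I$; let $\tilde E_I$ be the index of the first trial with outcome $I$, and set $\tau_k:=\min\{\tilde E_I: k\in I\}$; the law of $(\tau_1,\ldots,\tau_d)$ is $\mathcal{G}^{\mathcal W}(\tilde{\mathbf p})$. *)

From Stdlib Require Import Reals ClassicalEpsilon.
From mathcomp Require Import all_boot.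

Set Implicit Arguments.
Unset Strict Implicit.
Unset Printing Implicit Defensive.
Local Open Scope R_scope.

(* Points of N^d: coordinate i (i : 'I_d, standing for i+1 in {1..d}).
   A discrete law on N^d is given by its probability mass function
   f : ('I_d -> nat) -> R, which vanishes outside N^d = {1,2,...}^d. *)
Definition pt (d : nat) := 'I_d -> nat.

Definition shift (d N : nat) (x : {ffun 'I_d -> 'I_N}) : pt d :=
  fun i => (nat_of_ord (x i)).+1.

Definition box_sum (d : nat) (f : pt d -> R) (A : pt d -> bool) (N : nat) : R :=
  \big[Rplus/R0]_(x : {ffun 'I_d -> 'I_N})
     (if A (shift x) then f (shift x) else R0).

(* P(A) := sum_{x in N^d, x in A} f x, the limit of the box sums. *)
Definition prob (d : nat) (f : pt d -> R) (A : pt d -> bool) : R :=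
  proj1_sig (constructive_indefinite_description
    (fun r => (exists l, Un_cv (box_sum f A) l) -> Un_cv (box_sum f A) r)
    (match classic (exists l, Un_cv (box_sum f A) l) with
     | or_introl H => let (l, Hl) := H in ex_intro _ l (fun _ => Hl)
     | or_intror H => ex_intro _ R0 (fun H' => False_ind _ (H H'))
     end)).

Definition is_pmf (d : nat) (f : pt d -> R) : Prop :=
  (forall x, Rle 0 (f x)) /\
  (forall x : pt d, (exists i, x i = 0%N) -> f x = R0) /\
  Un_cv (box_sum f (fun _ => true)) R1.

Definition local_LMP (d : nat) (f : pt d -> R) : Prop :=
  forall (k : nat), (1 <= k <= d)%N ->
  forall (i : 'I_k -> 'I_d) (m : nat) (n : 'I_k -> nat),
    let A := fun x : pt d => [forall j : 'I_k, (n j + m < x (i j))%N] in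
    let B := fun x : pt d => [forall j : 'I_k, (m < x (i j))%N] in
    let C := fun x : pt d => [forall j : 'I_k, (n j < x (i j))%N] in
    (0 < prob f B) ->
    (prob f (fun x => A x && B x) / prob f B) = prob f C.

Definition wsg_admissible (d : nat) (p : {set 'I_d} -> R) : Prop :=
  (forall I, 0 <= p I <= 1) /\
  \big[Rplus/R0]_(I : {set 'I_d}) p I = R1 /\
  (forall k : 'I_d, (\big[Rplus/R0]_(I : {set 'I_d} | k \notin I) p I < 1)).

(* Outcomes w of the first M trials: trial t+1 has outcome w t.
   first_hit w k = tilde-tau_k on these trials = index of the first trial
   whose outcome contains k, or M+1 if none of the first M trials does. *)
Definition first_hit (d M : nat) (w : {ffun 'I_M -> {set 'I_d}}) (k : 'I_d) : nat :=
  (find (fun I : {set 'I_d} => k \in I) [seq w t | t <- enum 'I_M]).+1.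

(* The pmf of G^W(p): P(tau = x) is the probability (under the i.i.d.
   product law of the trials) that the first M := max_k x_k trials produce
   first hits exactly x; the event {tau = x} only depends on these trials. *)
Definition wsg_pmf (d : nat) (p : {set 'I_d} -> R) (x : pt d) : R :=
  let M := (\max_(i : 'I_d) x i)%N in
  \big[Rplus/R0]_(w : {ffun 'I_M -> {set 'I_d}})
     (if [forall k : 'I_d, first_hit w k == x k]
      then \big[Rmult/R1]_(t : 'I_M) p (w t) else R0).

Definition wsg_param_of (d : nat) (f : pt d -> R) (I : {set 'I_d}) : R :=
  prob f (fun x => [forall i : 'I_d, if i \in I then x i == 1%N else (1 < x i)%N]).

(* Both directions go through the survival function
   S(i, n) = P(tau_(i_j) > n_j for all j).  Under G^W(p) this event says that
   trial t avoids every i_j with t < n_j, so by independence of the trials S is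
   a product over t of one-trial probabilities, which is visibly memoryless.
   Conversely, lack of memory with m = 1 peels off one trial at a time, so S is
   the same product with p replaced by the canonical parameters
   p_I = P(tau = 1 on I, tau > 1 off I).  A point mass is a signed combination
   of survival probabilities (inclusion-exclusion over the corners of a box),
   hence the two laws coincide.  Admissibility: if the p_I with k notin I
   summed to 1, then tau_k > N almost surely for every N, leaving no mass. *)

From HB Require Import structures.
From Stdlib Require Import Reals Lra FunctionalExtensionality ClassicalEpsilon.
From mathcomp Require Import all_boot zify.

Set Implicit Arguments.
Unset Strict Implicit.
Unset Printing Implicit Defensive.
Local Open Scope R_scope.

HB.instance Definition _ := Monoid.isComLaw.Build R R0 Rplus
  (fun a b c => esym (Rplus_assoc a b c)) Rplus_comm Rplus_0_l.
HB.instance Definition _ := Monoid.isComLaw.Build R R1 Rmult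
  (fun a b c => esym (Rmult_assoc a b c)) Rmult_comm Rmult_1_l.
HB.instance Definition _ := Monoid.isMulLaw.Build R R0 Rmult Rmult_0_l Rmult_0_r.
HB.instance Definition _ :=
  Monoid.isAddLaw.Build R Rmult Rplus Rmult_plus_distr_r Rmult_plus_distr_l.

Definition indR (b : bool) : R := if b then 1 else 0.

Lemma if_indR (b : bool) (a : R) : (if b then a else R0) = a * indR b.
Proof. by case: b; rewrite /indR /=; ring. Qed.

Lemma prodR_indR (I : finType) (P : pred I) :
  \big[Rmult/R1]_(i : I) indR (P i) = indR [forall i, P i].
Proof.
case: (boolP [forall i, P i]) => [/forallP HP | ].
  by apply: big1 => i _; rewrite HP.
rewrite negb_forall => /existsP [i0 Hi0].
by rewrite (bigD1 i0) //= /indR (negbTE Hi0) Rmult_0_l.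
Qed.

Lemma sumR_ge0 (I : Type) (r : seq I) (P : pred I) (F : I -> R) :
  (forall i, P i -> 0 <= F i) -> 0 <= \big[Rplus/R0]_(i <- r | P i) F i.
Proof. by move=> H; apply: (big_ind (fun v => 0 <= v)); [lra | move=> *; lra | ]. Qed.

Lemma ler_sumR (I : Type) (r : seq I) (P : pred I) (F G : I -> R) :
  (forall i, P i -> F i <= G i) ->
  \big[Rplus/R0]_(i <- r | P i) F i <= \big[Rplus/R0]_(i <- r | P i) G i.
Proof. by move=> H; apply: (big_ind2 (fun a b => a <= b)); [lra | move=> *; lra | ]. Qed.

Lemma prodR_ge0 (I : Type) (r : seq I) (P : pred I) (F : I -> R) :
  (forall i, P i -> 0 <= F i) -> 0 <= \big[Rmult/R1]_(i <- r | P i) F i.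
Proof.
by move=> H; apply: (big_ind (fun v => 0 <= v)); [lra | move=> *; apply: Rmult_le_pos | ].
Qed.

Lemma cv_eventually_const (u : nat -> R) (c : R) N0 :
  (forall N, (N0 <= N)%N -> u N = c) -> Un_cv u c.
Proof.
move=> H e he; exists N0 => N /leP hN; rewrite H // /R_dist Rminus_diag Rabs_R0; lra.
Qed.

Lemma CV_sum_scaled (I : Type) (r : seq I) (c : I -> R) (u : I -> nat -> R) (l : I -> R) :
  (forall s, Un_cv (u s) (l s)) ->
  Un_cv (fun N => \big[Rplus/R0]_(s <- r) (c s * u s N))
        (\big[Rplus/R0]_(s <- r) (c s * l s)).
Proof.
move=> H; elim: r => [|s r IH].
  by apply: (@cv_eventually_const _ _ 0) => N _; rewrite !big_nil.
rewrite big_cons; apply: (Un_cv_ext (fun N =>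
  c s * u s N + \big[Rplus/R0]_(s0 <- r) (c s0 * u s0 N))).
  by move=> N; rewrite big_cons.
by apply: CV_plus => //; apply: CV_mult => //; exact: (@cv_eventually_const _ _ 0).
Qed.

Definition pos_pt d (x : pt d) : Prop := forall j, (0 < x j)%N.

Lemma shift_pos_pt d N (x : {ffun 'I_d -> 'I_N}) : pos_pt (shift x).
Proof. by []. Qed.

Section BoxSum.
Variables (d : nat) (f : pt d -> R).
Hypothesis f_ge0 : forall x, 0 <= f x.

Lemma box_sum_ext (A B : pt d -> bool) :
  (forall x, pos_pt x -> A x = B x) -> box_sum f A = box_sum f B.
Proof.
move=> AB; apply: functional_extensionality => N; apply: eq_bigr => x _.
by rewrite AB.
Qed.

Lemma box_sum_ge0 A N : 0 <= box_sum f A N.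
Proof. by apply: sumR_ge0 => x _; case: ifP => _; [apply: f_ge0 | lra]. Qed.

Lemma box_sum_le (A B : pt d -> bool) N :
  (forall x, pos_pt x -> A x -> B x) -> box_sum f A N <= box_sum f B N.
Proof.
move=> AB; apply: ler_sumR => x _; case: ifP => [/(AB _ (shift_pos_pt x)) -> | _].
  exact: Rle_refl.
by case: (B _); [apply: f_ge0 | lra].
Qed.

Lemma box_sum_growing A : Un_growing (box_sum f A).
Proof.
move=> N; rewrite /box_sum.
pose widen (x : {ffun 'I_d -> 'I_N}) : {ffun 'I_d -> 'I_N.+1} :=
  [ffun j => widen_ord (leqnSn N) (x j)].
have shift_widen x : shift (widen x) = shift x.
  by apply: functional_extensionality => j; rewrite /shift ffunE.
have widen_inj : injective widen.
  move=> x y /ffunP E; apply/ffunP => j.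
  by apply: val_inj; have := E j; rewrite !ffunE => /(congr1 val).
rewrite (bigID (fun y => y \in widen @: [set: {ffun 'I_d -> 'I_N}])) /=.
rewrite big_imset /=; last by move=> x y _ _; apply: widen_inj.
have -> : \big[Rplus/R0]_(x in [set: {ffun 'I_d -> 'I_N}])
      (if A (shift (widen x)) then f (shift (widen x)) else R0) =
    \big[Rplus/R0]_(x : {ffun 'I_d -> 'I_N}) (if A (shift x) then f (shift x) else R0).
  by apply: eq_big => [x | x _]; rewrite ?inE ?shift_widen.
rewrite -[X in X <= _]Rplus_0_r; apply: Rplus_le_compat_l; apply: sumR_ge0 => x _.
by case: ifP => _; [apply: f_ge0 | lra].
Qed.

End BoxSum.

Lemma box_sum_cv_prob d (f : pt d -> R) A : is_pmf f -> Un_cv (box_sum f A) (prob f A).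
Proof.
move=> [f_ge0 [_ f_total]].
have [l Hl] : {l | Un_cv (box_sum f A) l}.
  apply: growing_cv; first exact: box_sum_growing.
  exists 1 => _ [N ->]; apply: Rle_trans (box_sum_le f_ge0 (B := fun _ => true) N _) _ => //.
  exact: growing_ineq (box_sum_growing f_ge0 _) f_total N.
rewrite /prob; case: constructive_indefinite_description => r Hr /=.
by apply: Hr; exists l.
Qed.

Section Prob.
Variables (d : nat) (f : pt d -> R).
Hypothesis f_pmf : is_pmf f.

Let f_ge0 : forall x, 0 <= f x. Proof. by case: f_pmf. Qed.

Lemma prob_ext (A B : pt d -> bool) :
  (forall x, pos_pt x -> A x = B x) -> prob f A = prob f B.
Proof.
move=> AB; apply: (UL_sequence (box_sum f A)); first exact: box_sum_cv_prob.
by rewrite (box_sum_ext f AB); exact: box_sum_cv_prob.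
Qed.

Lemma box_sum_le_prob A N : box_sum f A N <= prob f A.
Proof. exact: growing_ineq (box_sum_growing f_ge0 _) (box_sum_cv_prob A f_pmf) N. Qed.

Lemma prob_mono (A B : pt d -> bool) :
  (forall x, pos_pt x -> A x -> B x) -> prob f A <= prob f B.
Proof.
move=> AB; apply: Rle_cv_lim (box_sum_cv_prob A f_pmf) (box_sum_cv_prob B f_pmf) => N.
exact: box_sum_le.
Qed.

Lemma prob_ge0 A : 0 <= prob f A.
Proof. exact: Rle_trans (box_sum_ge0 f_ge0 _ _) (box_sum_le_prob A 0). Qed.

Lemma prob_total : prob f xpredT = 1.
Proof.
apply: (UL_sequence (box_sum f xpredT)); first exact: box_sum_cv_prob.
by case: f_pmf => _ [].
Qed.

Lemma prob_le1 A : prob f A <= 1.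
Proof. by rewrite -prob_total; apply: prob_mono. Qed.

Lemma prob_lin (S : finType) (c : S -> R) (E : S -> pt d -> bool) (A : pt d -> bool) :
  (forall y, pos_pt y -> indR (A y) = \big[Rplus/R0]_(s : S) (c s * indR (E s y))) ->
  prob f A = \big[Rplus/R0]_(s : S) (c s * prob f (E s)).
Proof.
move=> AE; apply: (UL_sequence (box_sum f A)); first exact: box_sum_cv_prob.
apply: (Un_cv_ext (fun N => \big[Rplus/R0]_(s : S) (c s * box_sum f (E s) N))); last first.
  by apply: CV_sum_scaled => s; exact: box_sum_cv_prob.
move=> N; rewrite /box_sum.
under eq_bigr do rewrite big_distrr /=.
rewrite exchange_big /=; apply: eq_bigr => x _.
rewrite if_indR (AE _ (shift_pos_pt x)) big_distrr /=; apply: eq_bigr => s _; rewrite if_indR; ring.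
Qed.

Lemma prob_compl (A : pt d -> bool) : prob f A + prob f (fun x => ~~ A x) = 1.
Proof.
rewrite -prob_total
  (@prob_lin _ (fun _ => 1) (fun (b : bool) x => if b then A x else ~~ A x) xpredT).
  by rewrite big_bool /= !Rmult_1_l.
by move=> y _; rewrite big_bool /= /indR; case: (A y) => /=; ring.
Qed.

End Prob.

Definition corner_sign d (phi : {ffun 'I_d -> bool}) : R :=
  \big[Rmult/R1]_i (if phi i then -1 else 1).

Definition corner d (x : pt d) (phi : {ffun 'I_d -> bool}) : pt d :=
  fun i => ((x i).-1 + phi i)%N.

Lemma indR_point_incl_excl d (x y : pt d) : pos_pt x ->
  indR [forall j, y j == x j] =
  \big[Rplus/R0]_(phi : {ffun 'I_d -> bool})
     (corner_sign phi * indR [forall j, (corner x phi j < y j)%N]).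
Proof.
move=> x_pos; rewrite -prodR_indR.
have coord j : indR (y j == x j) =
    \big[Rplus/R0]_(b : bool) ((if b then -1 else 1) * indR ((x j).-1 + b < y j)%N).
  rewrite big_bool /=; have := x_pos j.
  case: (x j) => // xj _ /=; rewrite addn1 addn0 /indR.
  by case: eqP => e1; case: ltnP => e2; case: ltnP => e3; (by exfalso; lia) || lra.
rewrite (eq_bigr _ (fun j _ => coord j)) bigA_distr_bigA /=.
by apply: eq_bigr => phi _; rewrite big_split /= prodR_indR.
Qed.

Definition surv_event d k (i : 'I_k -> 'I_d) (n : 'I_k -> nat) : pt d -> bool :=
  fun x => [forall j, (n j < x (i j))%N].

Lemma first_hit_gt d M (w : {ffun 'I_M -> {set 'I_d}}) (j : 'I_d) c : (c <= M)%N ->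
  (c < first_hit w j)%N = [forall t : 'I_M, (t < c)%N ==> (j \notin w t)].
Proof.
move=> cM; rewrite /first_hit ltnS.
set s := [seq w t | t <- enum 'I_M].
have size_s : size s = M by rewrite size_map size_enum_ord.
have nth_s (t : 'I_M) : nth set0 s t = w t.
  by rewrite (nth_map t) ?size_enum_ord // nth_ord_enum.
apply/idP/forallP => [c_le t | avoid].
  apply/implyP => tc; have := @before_find _ set0 (fun I : {set 'I_d} => j \in I) s t.
  by rewrite nth_s => ->//; exact: leq_trans tc c_le.
rewrite leqNgt; apply/negP => hlt.
have hM : (find (fun I : {set 'I_d} => j \in I) s < M)%N by exact: leq_trans hlt cM.
have := @nth_find _ set0 (fun I : {set 'I_d} => j \in I) s.
rewrite has_find size_s hM => /(_ isT).
have /= -> := nth_s (Ordinal hM).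
by have /implyP /(_ hlt) /negbTE -> := avoid (Ordinal hM).
Qed.

Lemma sum_trials_prod d M (p : {set 'I_d} -> R) (Q : 'I_M -> pred {set 'I_d}) :
  \big[Rplus/R0]_(w : {ffun 'I_M -> {set 'I_d}})
     (if [forall t, Q t (w t)] then \big[Rmult/R1]_t p (w t) else R0)
  = \big[Rmult/R1]_t \big[Rplus/R0]_(I : {set 'I_d}) (if Q t I then p I else R0).
Proof.
rewrite bigA_distr_bigA /=; apply: eq_bigr => w _.
rewrite if_indR -prodR_indR -big_split /=; apply: eq_bigr => t _; rewrite if_indR; ring.
Qed.

(* Probability that trial [t + 1] avoids every coordinate [i j] that must
   still survive at time [t], i.e. with [t < n j]. *)
Definition avoid_prob d (p : {set 'I_d} -> R) k (i : 'I_k -> 'I_d) (n : 'I_k -> nat)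
    (t : nat) : R :=
  \big[Rplus/R0]_(I : {set 'I_d})
     (if [forall j, (t < n j)%N ==> (i j \notin I)] then p I else R0).

Definition wsg_surv d (p : {set 'I_d} -> R) k (i : 'I_k -> 'I_d) (n : 'I_k -> nat) : R :=
  \big[Rmult/R1]_(0 <= t < \max_(j : 'I_k) n j) avoid_prob p i n t.

Lemma sum_trials_surv_event d M k (p : {set 'I_d} -> R) (i : 'I_k -> 'I_d) n :
  (forall j, n j <= M)%N ->
  \big[Rplus/R0]_(w : {ffun 'I_M -> {set 'I_d}})
     (if surv_event i n (first_hit w) then \big[Rmult/R1]_t p (w t) else R0)
  = \big[Rmult/R1]_(0 <= t < M) avoid_prob p i n t.
Proof.
move=> nM; rewrite big_mkord /avoid_prob.
rewrite -(sum_trials_prod p (fun (t : 'I_M) I => [forall j, (t < n j)%N ==> (i j \notin I)])).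
apply: eq_bigr => w _; congr (if _ then _ else _).
apply/forallP/forallP => [surv t | avoid j].
  by apply/forallP => j; move: (surv j); rewrite first_hit_gt // => /forallP.
by rewrite first_hit_gt //; apply/forallP => t; move: (avoid t) => /forallP.
Qed.

Section WsgSurv.
Variables (d : nat) (p : {set 'I_d} -> R).
Hypothesis p_sum1 : \big[Rplus/R0]_I p I = 1.

Lemma avoid_prob_ext k (i : 'I_k -> 'I_d) n n' t t' :
  (forall j, (t < n j)%N = (t' < n' j)%N) -> avoid_prob p i n t = avoid_prob p i n' t'.
Proof.
move=> E; apply: eq_bigr => I _; congr (if _ then _ else _).
by apply: eq_forallb => j; rewrite E.
Qed.

Lemma avoid_prob_late k (i : 'I_k -> 'I_d) n t :
  (forall j, n j <= t)%N -> avoid_prob p i n t = 1.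
Proof.
move=> nt; rewrite /avoid_prob -p_sum1; apply: eq_bigr => I _; rewrite ifT //.
by apply/forallP => j; apply/implyP => ht; have := nt j; lia.
Qed.

Lemma wsg_survE k (i : 'I_k -> 'I_d) n K : (forall j, n j <= K)%N ->
  \big[Rmult/R1]_(0 <= t < K) avoid_prob p i n t = wsg_surv p i n.
Proof.
move=> nK; rewrite /wsg_surv; set mx := \max_(j : 'I_k) n j.
have mxK : (mx <= K)%N by apply/bigmax_leqP => j _.
rewrite (big_cat_nat (leq0n mx) mxK) /= [X in _ * X]big1_seq ?Rmult_1_r // => t.
rewrite mem_index_iota => /andP [_ /andP [ht _]]; apply: avoid_prob_late => j.
exact: leq_trans (leq_bigmax j) ht.
Qed.

(* The first [m] factors only see the shift. *)
Lemma wsg_surv_shift k (i : 'I_k -> 'I_d) n m :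
  wsg_surv p i (fun j => n j + m)%N = wsg_surv p i (fun _ => m) * wsg_surv p i n.
Proof.
set mx := \max_(j : 'I_k) n j.
have n_mx j : (n j <= mx)%N by exact: leq_bigmax.
rewrite -(@wsg_survE k i (fun j => n j + m)%N (mx + m)); last by move=> j; rewrite leq_add2r.
rewrite -(@wsg_survE k i (fun _ => m) m) // -(@wsg_survE k i n mx) //.
rewrite (big_cat_nat (leq0n m) (leq_addl mx m)) /=; congr (_ * _).
  by apply: eq_big_nat => t /andP [_ ht]; apply: avoid_prob_ext => j; lia.
rewrite -{1}(add0n m) big_addn addnK; apply: eq_big_nat => t _; apply: avoid_prob_ext => j.
by rewrite ltn_add2r.
Qed.

Lemma sum_trials_point N (y : pt d) : pos_pt y -> (forall j, y j <= N)%N ->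
  \big[Rplus/R0]_(w : {ffun 'I_N -> {set 'I_d}})
     (if [forall j, first_hit w j == y j] then \big[Rmult/R1]_t p (w t) else R0)
  = \big[Rplus/R0]_(phi : {ffun 'I_d -> bool})
      (corner_sign phi * wsg_surv p (fun j => j) (corner y phi)).
Proof.
move=> y_pos yN.
under eq_bigr => w _ do rewrite if_indR (indR_point_incl_excl _ y_pos) big_distrr /=.
rewrite exchange_big /=; apply: eq_bigr => phi _.
have cN j : (corner y phi j <= N)%N.
  by rewrite /corner; have := yN j; have := y_pos j; case: (phi j) => /=; lia.
rewrite -(@wsg_survE d (fun j => j) (corner y phi) N) //.
rewrite -(sum_trials_surv_event p (fun j => j) cN) big_distrr /=.
by apply: eq_bigr => w _; rewrite if_indR /surv_event /=; ring.
Qed.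

Lemma wsg_pmf_incl_excl (y : pt d) : pos_pt y ->
  wsg_pmf p y = \big[Rplus/R0]_(phi : {ffun 'I_d -> bool})
                  (corner_sign phi * wsg_surv p (fun j => j) (corner y phi)).
Proof. by move=> y_pos; apply: sum_trials_point => // j; exact: leq_bigmax. Qed.

End WsgSurv.

Lemma box_sum_point d N (y : pt d) (G : pt d -> R) :
  \big[Rplus/R0]_(x : {ffun 'I_d -> 'I_N})
     (if [forall j, y j == shift x j] then G (shift x) else R0)
  = if [forall j, (0 < y j <= N)%N] then G y else R0.
Proof.
case: forallP => [y_box | y_out]; last first.
  rewrite big1 // => x _; rewrite ifF //; apply/negP => /forallP E; apply: y_out => j.
  by have /eqP -> := E j; rewrite /shift ltn_ord.
have y_lt j : ((y j).-1 < N)%N by have := y_box j; lia.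
pose x0 : {ffun 'I_d -> 'I_N} := [ffun j => Ordinal (y_lt j)].
have shift_x0 : shift x0 = y.
  by apply: functional_extensionality => j; rewrite /shift ffunE /=; have := y_box j; lia.
rewrite (bigD1 x0) //= shift_x0 ifT; last by apply/forallP.
rewrite big1 ?Rplus_0_r // => x x_x0; rewrite ifF //; apply/negP => /forallP E.
move/eqP: x_x0; apply; apply/ffunP => j; apply: val_inj; rewrite ffunE /=.
by have /eqP -> := E j.
Qed.

Section WsgLMP.
Variables (d : nat) (p : {set 'I_d} -> R) (f : pt d -> R).
Hypotheses (p_sum1 : \big[Rplus/R0]_I p I = 1) (p_ge0 : forall I, 0 <= p I).
Hypotheses (f_pmf : is_pmf f) (f_wsg : forall x, f x = wsg_pmf p x).

Lemma box_sum_wsg (A : pt d -> bool) N : box_sum f A N =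
  \big[Rplus/R0]_(w : {ffun 'I_N -> {set 'I_d}})
    (if A (first_hit w) && [forall j, first_hit w j <= N]%N
     then \big[Rmult/R1]_t p (w t) else R0).
Proof.
rewrite /box_sum.
transitivity (\big[Rplus/R0]_(x : {ffun 'I_d -> 'I_N})
    \big[Rplus/R0]_(w : {ffun 'I_N -> {set 'I_d}})
      (if [forall j, first_hit w j == shift x j] then
         (if A (shift x) then \big[Rmult/R1]_t p (w t) else R0) else R0)).
  apply: eq_bigr => x _; case: ifP => _; last by rewrite big1 // => w _; case: ifP.
  rewrite f_wsg (wsg_pmf_incl_excl p_sum1 (shift_pos_pt x)).
  by rewrite sum_trials_point // => j; rewrite /shift ltn_ord.
rewrite exchange_big; apply: eq_bigr => w _.
rewrite (@box_sum_point d N (first_hit w) (fun z => if A z then \big[Rmult/R1]_t p (w t) else R0)).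
case: (A _); rewrite ?andbF ?andFb /=; last by case: ifP.
by congr (if _ then _ else _); apply: eq_forallb.
Qed.

Lemma sum_trials_total N :
  \big[Rplus/R0]_(w : {ffun 'I_N -> {set 'I_d}}) \big[Rmult/R1]_t p (w t) = 1.
Proof.
transitivity (\big[Rmult/R1]_(t < N) \big[Rplus/R0]_(I : {set 'I_d})
                (if true then p I else R0)); last by rewrite big1.
rewrite -(sum_trials_prod p (fun (_ : 'I_N) (_ : {set 'I_d}) => true)).
by apply: eq_bigr => w _; rewrite ifT //; apply/forallP.
Qed.

Lemma prob_surv_wsg k (i : 'I_k -> 'I_d) n : prob f (surv_event i n) = wsg_surv p i n.
Proof.
set K := \max_(j : 'I_k) n j.
have n_le N : (K <= N)%N -> forall j, (n j <= N)%N.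
  by move=> KN j; exact: leq_trans (leq_bigmax j) KN.
have trials_ge0 N (w : {ffun 'I_N -> {set 'I_d}}) : 0 <= \big[Rmult/R1]_t p (w t).
  exact: prodR_ge0.
have survE N : (K <= N)%N -> wsg_surv p i n = \big[Rplus/R0]_(w : {ffun 'I_N -> {set 'I_d}})
    (if surv_event i n (first_hit w) then \big[Rmult/R1]_t p (w t) else R0).
  by move=> /n_le nN; rewrite sum_trials_surv_event // wsg_survE.
(* The box misses only trial sequences in which some coordinate is not hit
   within the first [N] trials, a set of mass [1 - box_sum f xpredT N]. *)
have upper N : (K <= N)%N -> box_sum f (surv_event i n) N <= wsg_surv p i n.
  move=> KN; rewrite box_sum_wsg (survE N KN); apply: ler_sumR => w _.
  by case: (surv_event _ _ _) => /=; [case: ifP => _; [lra | exact: trials_ge0] | lra].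
have lower N : (K <= N)%N ->
    wsg_surv p i n + box_sum f xpredT N <= 1 + box_sum f (surv_event i n) N.
  move=> KN; rewrite !box_sum_wsg (survE N KN) -(sum_trials_total N) -!big_split /=.
  apply: ler_sumR => w _; have := trials_ge0 N w.
  by case: (surv_event _ _ _); case: [forall j, _] => /=; lra.
have total_cv := proj2 (proj2 f_pmf).
apply: (UL_sequence (box_sum f (surv_event i n))); first exact: box_sum_cv_prob.
move=> e e_pos; have [N0 HN0] := total_cv e e_pos.
exists (maxn N0 K) => N /leP; rewrite geq_max => /andP [N0N KN].
have := HN0 N (elimT leP N0N); have := upper N KN; have := lower N KN.
have := growing_ineq _ _ (box_sum_growing (proj1 f_pmf) xpredT) total_cv N.
by rewrite /R_dist => *; split_Rabs; lra.
Qed.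

End WsgLMP.

Lemma local_LMP_surv d (f : pt d -> R) : local_LMP f <->
  (forall k, (1 <= k <= d)%N -> forall (i : 'I_k -> 'I_d) m n,
    0 < prob f (surv_event i (fun _ => m)) ->
    prob f (surv_event i (fun j => n j + m)%N) / prob f (surv_event i (fun _ => m))
    = prob f (surv_event i n)).
Proof.
have shiftE k (i : 'I_k -> 'I_d) m n :
    (fun x => [forall j, (n j + m < x (i j))%N] && [forall j, (m < x (i j))%N]) =
    surv_event i (fun j => n j + m)%N.
  apply: functional_extensionality => x; rewrite /surv_event.
  apply/andP/forallP => [[/forallP H _] | H]; first exact: H.
  by split; apply/forallP => j; have := H j; [done | lia].
by split=> H k hk i m n; have := H k hk i m n; rewrite /= shiftE; apply.
Qed.

Lemma wsg_local_LMP d (p : {set 'I_d} -> R) (f : pt d -> R) :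
  wsg_admissible p -> is_pmf f -> (forall x, f x = wsg_pmf p x) -> local_LMP f.
Proof.
move=> [p_bnd [p_sum1 _]] f_pmf f_wsg.
have p_ge0 I : 0 <= p I by case: (p_bnd I).
apply/local_LMP_surv => k _ i m n.
rewrite !(prob_surv_wsg p_sum1 p_ge0 f_pmf f_wsg) wsg_surv_shift // => m_pos.
by field; lra.
Qed.

Definition step_pattern k (t : nat) (n : 'I_k -> nat) : 'I_k -> nat :=
  fun j => if (t < n j)%N then 1%N else 0%N.

Lemma param_event_unique d (y : pt d) (I : {set 'I_d}) : pos_pt y ->
  [forall i, if i \in I then y i == 1%N else (1 < y i)%N] = (I == [set j | y j == 1%N]).
Proof.
move=> y_pos; apply/forallP/eqP => [yI | ->].
  apply/setP => j; rewrite inE; have := yI j.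
  by case: (j \in I) => [/eqP -> // | /ltn_eqF]; rewrite eq_sym.
by move=> j; rewrite inE; case: eqP => // y1; have := y_pos j; lia.
Qed.

Lemma sum_param_events d (y : pt d) (Q : pred {set 'I_d}) : pos_pt y ->
  \big[Rplus/R0]_(I : {set 'I_d})
     (indR (Q I) * indR [forall i, if i \in I then y i == 1%N else (1 < y i)%N])
  = indR (Q [set j | y j == 1%N]).
Proof.
move=> y_pos; under eq_bigr => I _ do rewrite (param_event_unique I y_pos).
rewrite (bigD1 [set j | y j == 1%N]) //= eqxx big1 => [|I /negbTE ->]; rewrite /indR /=; ring.
Qed.

Section CanonicalParam.
Variables (d : nat) (f : pt d -> R).
Hypothesis f_pmf : is_pmf f.

Lemma surv_event0 k (i : 'I_k -> 'I_d) n :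
  (forall j, n j = 0%N) -> prob f (surv_event i n) = 1.
Proof.
move=> n0; rewrite -(prob_total f_pmf); apply: prob_ext => // x x_pos.
by apply/forallP => j; rewrite n0.
Qed.

Lemma param_avoid_prob k (i : 'I_k -> 'I_d) n t :
  prob f (surv_event i (step_pattern t n)) = avoid_prob (wsg_param_of f) i n t.
Proof.
rewrite /avoid_prob /wsg_param_of.
under [RHS]eq_bigr => I _ do rewrite if_indR Rmult_comm.
apply: prob_lin => // y y_pos; rewrite sum_param_events //; congr indR.
apply: eq_forallb => j; rewrite /step_pattern inE.
case: ifP => _ /=; last by rewrite (y_pos (i j)).
by have := y_pos (i j); case: (y (i j)) => [|[|m]].
Qed.

Lemma param_sum1 : \big[Rplus/R0]_I wsg_param_of f I = 1.
Proof.
rewrite -(prob_total f_pmf) /wsg_param_of.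
rewrite (@prob_lin d f f_pmf _ (fun _ => 1) (fun (I : {set 'I_d}) x =>
  [forall i, if i \in I then x i == 1%N else (1 < x i)%N]) xpredT).
  by apply: eq_bigr => I _; rewrite Rmult_1_l.
by move=> y y_pos; rewrite -(sum_param_events xpredT y_pos).
Qed.

Lemma prob_point (x : pt d) : pos_pt x -> prob f (fun y => [forall j, y j == x j]) = f x.
Proof.
move=> x_pos; apply: (UL_sequence (box_sum f (fun y => [forall j, y j == x j]))).
  exact: box_sum_cv_prob.
apply: (@cv_eventually_const _ _ (\max_(j : 'I_d) x j)) => N xN.
rewrite /box_sum.
under eq_bigr => z _ do rewrite (eq_forallb (fun j => eq_sym (shift z j) (x j))).
rewrite box_sum_point ifT //; apply/forallP => j; rewrite x_pos.
exact: leq_trans (leq_bigmax j) xN.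
Qed.

Hypothesis f_LMP : local_LMP f.

(* Lack of memory with [m = 1], applied to the coordinates with [n j > 0];
   the others are redirected to one such coordinate [j0], which changes none
   of the events. *)
Lemma LMP_surv_peel k (i : 'I_k -> 'I_d) n : (1 <= k <= d)%N ->
  prob f (surv_event i n) =
  prob f (surv_event i (step_pattern 0 n)) * prob f (surv_event i (fun j => (n j).-1)).
Proof.
move=> hk; case: (pickP (fun j => 0 < n j)%N) => [j0 n_j0 | n0]; last first.
  have {}n0 j : n j = 0%N by have := n0 j; move/negbT; lia.
  by rewrite !surv_event0 ?Rmult_1_l // => j; rewrite /step_pattern n0.
pose i' j := if (0 < n j)%N then i j else i j0.
pose n' j := if (0 < n j)%N then (n j).-1 else (n j0).-1.
have E_n : prob f (surv_event i n) = prob f (surv_event i' (fun j => n' j + 1)%N).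
  apply: prob_ext => // x x_pos; rewrite /surv_event /i' /n'.
  apply/forallP/forallP => surv j; have := surv j; have := surv j0; rewrite ?n_j0 /=.
    by case: ifP; lia.
  by have := x_pos (i j); case: ifP; lia.
have E_step : prob f (surv_event i' (fun _ => 1%N)) = prob f (surv_event i (step_pattern 0 n)).
  apply: prob_ext => // x x_pos; rewrite /surv_event /i' /step_pattern.
  apply/forallP/forallP => surv j; have := surv j; have := surv j0; rewrite ?n_j0.
    by have := x_pos (i j); case: ifP.
  by case: ifP.
have E_pred : prob f (surv_event i' n') = prob f (surv_event i (fun j => (n j).-1)).
  apply: prob_ext => // x x_pos; rewrite /surv_event /i' /n'.
  apply/forallP/forallP => surv j; have := surv j; have := surv j0; rewrite ?n_j0.
    by have := x_pos (i j); case: ifP; lia.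
  by case: ifP.
have [step_pos | step0] := Rle_lt_or_eq_dec _ _ (prob_ge0 f_pmf (surv_event i (step_pattern 0 n))).
  have := proj1 (local_LMP_surv f) f_LMP k hk i' 1%N n'.
  rewrite E_step -E_n E_pred => /(_ step_pos) <-.
  by field; lra.
rewrite -step0 Rmult_0_l; apply: Rle_antisym; last exact: prob_ge0.
rewrite step0; apply: prob_mono => // x _ /forallP surv; apply/forallP => j.
by have := surv j; rewrite /step_pattern; case: ifP => //; lia.
Qed.

Lemma LMP_surv_prod k (i : 'I_k -> 'I_d) K n : (1 <= k <= d)%N -> (forall j, n j <= K)%N ->
  prob f (surv_event i n) = \big[Rmult/R1]_(0 <= t < K) prob f (surv_event i (step_pattern t n)).
Proof.
move=> hk; elim: K n => [|K IH] n nK.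
  by rewrite big_nil surv_event0 // => j; have := nK j; lia.
rewrite LMP_surv_peel // (IH (fun j => (n j).-1)) => [|j]; last by have := nK j; lia.
rewrite big_nat_recl //; congr (_ * _); apply: eq_bigr => t _.
congr (prob f (surv_event i _)); apply: functional_extensionality => j.
by rewrite /step_pattern; case: ifP; case: ifP => //; lia.
Qed.

Lemma LMP_surv_wsg k (i : 'I_k -> 'I_d) n : (1 <= k <= d)%N ->
  prob f (surv_event i n) = wsg_surv (wsg_param_of f) i n.
Proof.
move=> hk; rewrite (@LMP_surv_prod k i (\max_(j : 'I_k) n j)) // => [|j].
  by apply: eq_bigr => t _; exact: param_avoid_prob.
exact: leq_bigmax.
Qed.

End CanonicalParam.

Section LMPWsg.
Variables (d : nat) (f : pt d -> R).
Hypotheses (d_gt0 : (0 < d)%N) (f_pmf : is_pmf f) (f_LMP : local_LMP f).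

Lemma LMP_wsg_pmf x : f x = wsg_pmf (wsg_param_of f) x.
Proof.
have [x_pos | ] := boolP [forall j, (0 < x j)%N]; last first.
  rewrite negb_forall => /existsP [j0]; rewrite lt0n negbK => /eqP x_j0.
  rewrite (proj1 (proj2 f_pmf)); last by exists j0.
  by rewrite /wsg_pmf big1 // => w _; rewrite ifF //; apply/negP => /forallP /(_ j0); rewrite x_j0.
have {}x_pos : pos_pt x by move=> j; exact: (forallP x_pos j).
rewrite (wsg_pmf_incl_excl (param_sum1 f_pmf) x_pos) -(prob_point f_pmf x_pos).
rewrite (@prob_lin d f f_pmf _ (@corner_sign d)
  (fun phi => surv_event (fun j => j) (corner x phi))); last first.
  by move=> y _; exact: indR_point_incl_excl.
apply: eq_bigr => phi _; congr (_ * _); apply: LMP_surv_wsg => //.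
by rewrite d_gt0 leqnn.
Qed.

Lemma LMP_tail_geometric (k0 : 'I_d) N :
  prob f (surv_event (fun _ : 'I_1 => k0) (fun _ => N)) =
  (\big[Rplus/R0]_(I : {set 'I_d} | k0 \notin I) wsg_param_of f I) ^ N.
Proof.
rewrite (@LMP_surv_prod d f f_pmf f_LMP 1 _ N) ?d_gt0 //.
rewrite (@eq_big_nat _ _ _ 0 N _
  (fun _ => \big[Rplus/R0]_(I : {set 'I_d} | k0 \notin I) wsg_param_of f I)).
  by rewrite big_const_nat subn0; elim: N => //= N ->.
move=> t /andP [_ tN]; rewrite param_avoid_prob // /avoid_prob [RHS]big_mkcond /=.
apply: eq_bigr => I _; congr (if _ then _ else _).
by apply/forallP/idP => [/(_ ord0) | kI j]; rewrite tN.
Qed.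

Lemma LMP_param_admissible : wsg_admissible (wsg_param_of f).
Proof.
split; first by move=> I; split; [exact: prob_ge0 | exact: prob_le1].
split; first exact: param_sum1.
move=> k0; set h := \big[Rplus/R0]_(I : {set 'I_d} | k0 \notin I) wsg_param_of f I.
apply: Rnot_le_lt => h_ge1.
have h1 : h = 1.
  apply: Rle_antisym => //; rewrite -[h]pow_1 -LMP_tail_geometric; exact: prob_le1.
(* If [h = 1] then [tau_k0 > N] almost surely for every [N], yet the box
   [{1..N}^d] lies inside [{tau_k0 <= N}]: all box sums vanish. *)
have box0 N : box_sum f xpredT N <= 0.
  have := prob_compl f_pmf (surv_event (fun _ : 'I_1 => k0) (fun _ => N)).
  rewrite LMP_tail_geometric -/h h1 pow1 => compl.
  apply: (Rle_trans _ (prob f (fun x => ~~ surv_event (fun _ : 'I_1 => k0) (fun _ => N) x)));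
    last lra.
  apply: Rle_trans (box_sum_le_prob f_pmf _ N); apply: Req_le; apply: eq_bigr => z _.
  by rewrite /surv_event /shift /=; case: forallP => // /(_ ord0); rewrite ltnNge ltn_ord.
have [N0 HN0] := proj2 (proj2 f_pmf) (1/2) ltac:(lra).
have := HN0 N0 (le_n _); have := box0 N0; rewrite /R_dist => *; split_Rabs; lra.
Qed.

End LMPWsg.

Theorem theorem2p2 (d : nat) (hd : (0 < d)%N) (f : pt d -> Rdefinitions.R) (hf : is_pmf f) :
  (local_LMP f <->
     exists p : {set 'I_d} -> Rdefinitions.R, wsg_admissible p /\ forall x, f x = wsg_pmf p x)
  /\
  (local_LMP f ->
     wsg_admissible (wsg_param_of f) /\ forall x, f x = wsg_pmf (wsg_param_of f) x).
Proof.
have canonical : local_LMP f ->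
    wsg_admissible (wsg_param_of f) /\ forall x, f x = wsg_pmf (wsg_param_of f) x.
  move=> f_LMP; split; first exact: LMP_param_admissible.
  exact: LMP_wsg_pmf.
split=> //; split.
  by move=> f_LMP; exists (wsg_param_of f); exact: canonical.
by case=> p [p_adm f_wsg]; exact: wsg_local_LMP p_adm hf f_wsg.
Qed.
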